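(* Let $k,n,x^*$ be positive integers, $p\in(0,1)$, and let $a$ be a binary string which is a cyclic shift of $10^{a_1}10^{a_2}\cdots10^{a_k}$ with $a_1,\dots,a_k$ nonnegative integers. Put $n'=pn$ and $b_j=a_j-n(1-p)$ for $j\in[k]$. Then there is a function $\mathrm{Sym}(\cdot\,;n,p,b,x^* )$ on $\{0,1,\dots,x^*\}^k$, depending only on $n,p,b,x^*$ and invariant under permutations of its $k$ arguments, such that for every $(x_1,\dots,x_k)\in\{0,\dots,x^*\}^k$, letting $x$ denote the binary string $10^{n+x_1}10^{n+x_2}\cdots10^{n+x_k}$, $$\Pr_{\tilde{x}\sim\mathrm{Del}(x)}[\tilde{x}=a]=\mathrm{Sym}(x;n,p,b,x^* )\sum_{i=1}^{k}\prod_{j=1}^{k}\prod_{h=x_j+1}^{x^*}\left(n'-b_{j+i}+h\right),$$ where indices of $b$ are taken modulo $k$.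
   Context: $0^t$ denotes $t$ consecutive zeros. The circular deletion channel $\mathrm{Del}(x)$ with deletion probability $p$ deletes each bit of $x$ independently with probability $p$ and then returns a uniformly random cyclic shift of the resulting string. *)

From HB Require Import structures.
From mathcomp Require Import all_boot all_order all_algebra.
From mathcomp Require Export reals.
Set Implicit Arguments. Unset Strict Implicit. Unset Printing Implicit Defensive.
Import Order.TTheory GRing.Theory Num.Theory.
Local Open Scope ring_scope.

(* Binary strings are [bitseq]s; [true] = 1, [false] = 0. *)

(* Probability that a uniformly random cyclic shift of [s] equals [a]
   (the empty string has only the trivial shift). *)
Definition circ_shift_prob {R : realType} (s a : bitseq) : R :=
  if size s == 0%N then (s == a)%:R
  else (count (fun r => rot r s == a) (iota 0 (size s)))%:R / (size s)%:R.

(* Pr_{x~ ~ Del(x)}[x~ = a] for the circular deletion channel with deletion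
   probability p: each bit of x is kept (mask bit true) with prob. 1-p,
   deleted with prob. p, independently; then a uniform cyclic shift. *)
Definition del_prob {R : realType} (p : R) (x a : bitseq) : R :=
  \sum_(m : (size x).-tuple bool)
     (\prod_(i < size x) (if tnth m i then 1 - p else p))
     * circ_shift_prob (mask m x) a.

Definition blocks (cs : seq nat) : bitseq :=
  flatten [seq true :: nseq c false | c <- cs].

Definition xstring (n : nat) (xs : seq nat) : bitseq :=
  blocks [seq (n + v)%N | v <- xs].

(* b_{j+1} = a_{j+1} - n(1-p)  (0-indexed argument j) *)
Definition bcoef {R : realType} (n : nat) (p : R) (aseq : seq nat) (j : nat) : R :=
  (nth 0%N aseq j)%:R - n%:R * (1 - p).

(* A string with k ones can arise from x = 1 0^{N_1} ... 1 0^{N_k} only if the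
   deletion keeps every 1.  The surviving runs of 0s then have independent
   Binomial(N_j, 1 - p) lengths c_j, and a uniform cyclic shift of
   1 0^{c_1} ... 1 0^{c_k} is a given cyclic shift of a iff (c_j) is one of
   the k rotations of (a_j), each hit with probability 1/|a|.  Hence
     Pr = |a|^-1 sum_i prod_j (1 - p) C(n + x_j, a_{j+i}) (1 - p)^a_{j+i} p^(n + x_j - a_{j+i}).
   Padding each run up to length n + x^* with C(N, c) (N + 1) = C(N + 1, c) (N + 1 - c)
   splits every factor into a part whose product over j is symmetric in x and
   prod_h (n + h - a_{j+i}) = prod_h (n' - b_{j+i} + h). *)

From HB Require Import structures.
From mathcomp Require Import all_boot all_order all_algebra.
From mathcomp Require Import reals ring zify.
Set Implicit Arguments. Unset Strict Implicit. Unset Printing Implicit Defensive.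
Import Order.TTheory GRing.Theory Num.Theory.

Lemma rot_mod (T : Type) (s : seq T) m : m <= size s -> rot m s = rot (m %% size s) s.
Proof.
by rewrite leq_eqVlt => /orP[/eqP-> | lt_m]; rewrite ?modnn ?rot_size ?rot0 ?modn_small.
Qed.

Lemma rot_rot_mod (T : Type) (s : seq T) m n : m <= size s -> n <= size s ->
  rot m (rot n s) = rot ((m + n) %% size s) s.
Proof.
move=> le_m le_n; rewrite rot_add_mod //; case: leqP => [le_mn | lt_mn]; first exact: rot_mod.
rewrite rot_mod; last by lia.
by rewrite -{2}(subnK (ltnW lt_mn)) modnDr.
Qed.

Lemma count_rot (T : Type) (a : pred T) n s : count a (rot n s) = count a s.
Proof. by rewrite /rot count_cat addnC -count_cat cat_take_drop. Qed.

Lemma nth_rot (T : Type) (x0 : T) (s : seq T) i j : i <= size s -> j < size s ->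
  nth x0 (rot i s) j = nth x0 s ((j + i) %% size s).
Proof.
move=> le_i lt_j; rewrite nth_cat size_drop; case: ltnP => [lt_ji | le_ij].
  by rewrite nth_drop modn_small 1?addnC //; lia.
rewrite nth_take; last by lia.
have le_n : size s <= j + i by lia.
by rewrite -(subnK le_n) modnDr modn_small; [congr nth; lia | lia].
Qed.

Lemma count_iota_sum (P : pred nat) n : count P (iota 0 n) = \sum_(i < n) P i.
Proof.
rewrite -(big_mkord xpredT (fun i => P i : nat)) /index_iota subn0 -sum1_count big_mkcond.
by apply: eq_bigr => i _; case: (P i).
Qed.

Lemma sum_rot_eq_rot (T : eqType) (s u : seq T) c :
  \sum_(r < size s) (rot r s == rot c u) = \sum_(r < size s) (rot r s == u).
Proof.
have [size_su | size_su] := eqVneq (size s) (size u); last first.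
  by rewrite !big1 // => r _; case: eqP => // /(congr1 size); rewrite !size_rot => /eqP;
    rewrite (negbTE size_su).
case def_n: (size s) size_su => [|n] size_su; first by rewrite !big_ord0.
rewrite (rot_minn c u) -size_su; set d := minn c n.+1.
rewrite [LHS](reindex_inj (addIr (inZp d : 'I_n.+1))); apply: eq_bigr => r _.
rewrite -[rot r s == u](eqseq_rot d).
by rewrite rot_rot_mod def_n ?geq_minr 1?ltnW //= modnDmr addnC.
Qed.

Lemma sum_rot_eq_swap (T : eqType) (s t : seq T) :
  \sum_(i < size t) (rot i s == t) = \sum_(1 <= i < (size t).+1) (s == rot i t).
Proof.
rewrite -(big_mkord xpredT (fun i => rot i s == t : nat)) big_add1 /= big_nat_rev /= add0n.
apply: eq_big_nat => i /andP[_ lt_i].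
by rewrite -(inj_eq (@rotr_inj (size t - i.+1) _)) rotK /rotr subKn.
Qed.

Lemma count_blocks cs : count id (blocks cs) = size cs.
Proof. by elim: cs => //= c cs IH; rewrite count_cat count_nseq mul0n IH. Qed.

Lemma blocks_cat s1 s2 : blocks (s1 ++ s2) = blocks s1 ++ blocks s2.
Proof. by rewrite /blocks map_cat flatten_cat. Qed.

Lemma index_true_blocks s : index true (blocks s) = 0.
Proof. by case: s. Qed.

Lemma blocks_inj : injective blocks.
Proof.
elim=> [|c s IH] [|d t] // eq_blocks.
have {eq_blocks} eq_tail : nseq c false ++ blocks s = nseq d false ++ blocks t.
  exact: (congr1 (@behead _) eq_blocks).
have eq_cd : c = d.
  have := congr1 (index true) eq_tail.
  by rewrite !index_cat !mem_nseq !andbF !size_nseq !index_true_blocks !addn0.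
by move/eqP: eq_tail; rewrite eq_cd eqseq_cat ?size_nseq // eqxx => /eqP/IH ->.
Qed.

Lemma rot_blocks_take cs i : rot (size (blocks (take i cs))) (blocks cs) = blocks (rot i cs).
Proof. by rewrite -{2}(cat_take_drop i cs) blocks_cat rot_size_cat /rot blocks_cat. Qed.

Lemma size_blocks_rot i cs : size (blocks (rot i cs)) = size (blocks cs).
Proof. by rewrite -rot_blocks_take size_rot. Qed.

Lemma size_blocks_take_nth cs i : i < size cs ->
  size (blocks (take i.+1 cs)) = size (blocks (take i cs)) + (nth 0 cs i).+1.
Proof. by move=> lt_i; rewrite (take_nth 0) // -cats1 blocks_cat size_cat /= cats0 size_nseq. Qed.

Lemma head_rot_blocks_cons c t o : 0 < o <= c -> head true (rot o (blocks (c :: t))) = false.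
Proof.
case: o => // o /andP[_ lt_oc]; rewrite /rot /= drop_cat size_nseq lt_oc drop_nseq.
by have [m ->] : exists m, c - o = m.+1 by exists (c - o).-1; lia.
Qed.

Lemma sum_rot_blocks (g : bitseq -> nat) cs :
  (forall u, head true u = false -> g u = 0) ->
  \sum_(r < size (blocks cs)) g (rot r (blocks cs)) = \sum_(i < size cs) g (blocks (rot i cs)).
Proof.
move=> g0; rewrite -(big_mkord xpredT (fun r => g (rot r (blocks cs)))).
rewrite -(big_mkord xpredT (fun i => g (blocks (rot i cs)))).
suff seg i : i <= size cs ->
    \sum_(0 <= r < size (blocks (take i cs))) g (rot r (blocks cs)) =
    \sum_(0 <= j < i) g (blocks (rot j cs)).
  by have := seg _ (leqnn _); rewrite take_size.
(* Within the i-th block only the shift to its leading 1 can contribute. *)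
elim: i => [|i IH] lt_i; first by rewrite take0 !big_nil.
set pos := size (blocks (take i cs)); set c := nth 0 cs i.
have le_size : pos + c.+1 <= size (blocks cs).
  by rewrite -size_blocks_take_nth // -{2}(cat_take_drop i.+1 cs) blocks_cat size_cat leq_addr.
rewrite size_blocks_take_nth // big_nat_recr //= -IH; last exact: ltnW.
rewrite (big_cat_nat (leq0n pos) (leq_addr _ _)) /=; congr (_ + _).
rewrite big_ltn ?addnS ?ltnS ?leq_addr // rot_blocks_take big1_seq ?addn0 // => r.
rewrite mem_index_iota /= => /andP[lt_pos_r lt_r].
rewrite -(subnK (ltnW lt_pos_r)) rotD; last by lia.
by rewrite rot_blocks_take; apply: g0; rewrite /rot (drop_nth 0) // head_rot_blocks_cons //; lia.
Qed.

Local Open Scope ring_scope.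

Lemma big_tuple_cons (V : nmodType) (T : finType) n (F : n.+1.-tuple T -> V) :
  \sum_(t : n.+1.-tuple T) F t = \sum_(x : T) \sum_(t : n.-tuple T) F [tuple of x :: t].
Proof.
rewrite pair_big /= (reindex (fun xt : T * n.-tuple T => [tuple of xt.1 :: xt.2])) /=.
  by apply: eq_bigr => -[].
exists (fun t : n.+1.-tuple T => (thead t, [tuple of behead t])).
  by move=> [x t] _; rewrite theadE; congr pair; apply: val_inj.
by move=> t _; rewrite [RHS]tuple_eta.
Qed.

Section MaskExpectation.

Variables (R : comPzRingType) (p : R).

Fixpoint mask_expect (x : bitseq) (F : bitseq -> R) : R :=
  if x is b :: x' then
    (1 - p) * mask_expect x' (fun s => F (b :: s)) + p * mask_expect x' F
  else F [::].

Lemma mask_expectE x F :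
  \sum_(m : (size x).-tuple bool)
     (\prod_(i < size x) (if tnth m i then 1 - p else p)) * F (mask m x)
  = mask_expect x F.
Proof.
elim: x F => [|b x IH] F /=.
  rewrite (big_pred1 [tuple]) ?big_ord0 ?mul1r // => t.
  by rewrite [t]tuple0; apply/esym/eqP.
rewrite big_tuple_cons big_bool /= -!IH !big_distrr /=.
by congr (_ + _); apply: eq_bigr => t _; rewrite big_ord_recl mulrA;
  congr (_ * _ * _); apply: eq_bigr => i _; rewrite !(tnth_nth false).
Qed.

Lemma mask_expect_cat x y F :
  mask_expect (x ++ y) F = mask_expect x (fun s => mask_expect y (fun t => F (s ++ t))).
Proof. by elim: x F => [|b x IH] F //=; rewrite !IH. Qed.

Lemma mask_expect_eq0 x F : (forall s, subseq s x -> F s = 0) -> mask_expect x F = 0.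
Proof.
elim: x F => [|b x IH] F F0 /=; first exact: F0.
rewrite !IH ?mulr0 ?addr0 // => s sx; apply: F0; last by rewrite /= eqxx.
exact: subseq_trans sx (subseq_cons x b).
Qed.

Definition bin_weight N c : R := 'C(N, c)%:R * (1 - p) ^+ c * p ^+ (N - c).

Lemma bin_weight_small N c : (N < c)%N -> bin_weight N c = 0.
Proof. by move=> ltNc; rewrite /bin_weight bin_small // !mul0r. Qed.

Lemma bin_weightS N c :
  bin_weight N.+1 c.+1 = (1 - p) * bin_weight N c + p * bin_weight N c.+1.
Proof.
rewrite /bin_weight binS natrD subSS exprS.
case: (ltnP c N) => [ltcN | leNc]; last by rewrite bin_small ?ltnS //; ring.
by rewrite (_ : N - c = (N - c.+1).+1)%N ?exprS; [ring | lia].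
Qed.

Lemma mask_expect_zeros N G :
  mask_expect (nseq N false) G =
  \sum_(0 <= c < N.+1) bin_weight N c * G (nseq c false).
Proof.
elim: N G => [|N IH] G.
  by rewrite big_nat1 /bin_weight bin0 !expr0 !mul1r.
have w0 : bin_weight N.+1 0 = p * bin_weight N 0.
  by rewrite /bin_weight !bin0 !subn0 exprS; ring.
have shift : \sum_(0 <= c < N.+1) bin_weight N c * G (nseq c false) =
    bin_weight N 0 * G [::] + \sum_(0 <= c < N.+1) bin_weight N c.+1 * G (nseq c.+1 false).
  by rewrite big_nat_recl // [in RHS]big_nat_recr //= (bin_weight_small (ltnSn N)) mul0r addr0.
rewrite /= !IH shift [RHS]big_nat_recl // w0.
under [in RHS]eq_big_nat do
  rewrite bin_weightS mulrDl -[(1 - p) * _ * _]mulrA -[p * _ * _]mulrA.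
by rewrite big_split /= -!big_distrr /=; ring.
Qed.

(* The factor 1 - p is the survival probability of the 1 opening each block. *)
Fixpoint block_expect (Ns : seq nat) (G : seq nat -> R) : R :=
  if Ns is N :: Ns' then
    \sum_(0 <= c < N.+1) (1 - p) * bin_weight N c * block_expect Ns' (fun cs => G (c :: cs))
  else G [::].

Lemma mask_expect_blocks Ns F :
  (forall s, (count id s < size Ns)%N -> F s = 0) ->
  mask_expect (blocks Ns) F = block_expect Ns (fun cs => F (blocks cs)).
Proof.
elim: Ns F => [|N Ns IH] F F0 //=.
rewrite [X in _ + p * X]mask_expect_eq0 => [|s /(leq_count_subseq id)]; last first.
  by rewrite count_cat count_nseq mul0n count_blocks -ltnS => /F0.
rewrite mulr0 addr0 mask_expect_cat mask_expect_zeros big_distrr /=.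
apply: eq_bigr => c _; rewrite IH -?mulrA // => s lt_s.
by apply: F0; rewrite /= count_cat count_nseq mul0n.
Qed.

Lemma eq_block_expect Ns F G :
  (forall cs, size cs = size Ns -> F cs = G cs) -> block_expect Ns F = block_expect Ns G.
Proof.
elim: Ns F G => [|N Ns IH] F G FG /=; first exact: FG.
apply: eq_bigr => c _; congr (_ * _); apply: IH => cs size_cs.
by apply: FG; rewrite /= size_cs.
Qed.

Lemma block_expectZ Ns a G :
  block_expect Ns (fun cs => a * G cs) = a * block_expect Ns G.
Proof.
elim: Ns G => [|N Ns IH] G //=; rewrite big_distrr /=.
by apply: eq_bigr => c _; rewrite (IH (fun cs => G (c :: cs))) mulrCA.
Qed.

Lemma block_expect_sum (I : Type) (r : seq I) Ns (G : I -> seq nat -> R) :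
  block_expect Ns (fun cs => \sum_(i <- r) G i cs) = \sum_(i <- r) block_expect Ns (G i).
Proof.
elim: Ns G => [|N Ns IH] G //=; rewrite exchange_big /=.
by apply: eq_bigr => c _; rewrite (IH (fun i cs => G i (c :: cs))) big_distrr.
Qed.

Lemma block_expect_indicator Ns t : size t = size Ns ->
  block_expect Ns (fun cs => (cs == t)%:R) =
  \prod_(0 <= j < size Ns) ((1 - p) * bin_weight (nth 0%N Ns j) (nth 0%N t j)).
Proof.
elim: Ns t => [|N Ns IH] [|t0 t] //=; first by rewrite big_nil.
case=> size_t.
have split_eq c : block_expect Ns (fun cs => (c :: cs == t0 :: t)%:R) =
    (c == t0)%:R * \prod_(0 <= j < size Ns) ((1 - p) * bin_weight (nth 0%N Ns j) (nth 0%N t j)).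
  rewrite -IH // -block_expectZ; apply: eq_block_expect => cs _.
  by rewrite eqseq_cons -mulnb natrM.
under eq_bigr => c _ do rewrite split_eq mulrCA mulr_natl mulrb.
rewrite [RHS]big_nat_recl //=; case: (ltnP N t0) => [ltNt0 | let0N].
  rewrite (bin_weight_small ltNt0) mulr0 mul0r big1_seq // => c.
  by rewrite mem_index_iota; case: eqP => // ->; rewrite (bin_weight_small ltNt0) mulr0 mul0r.
rewrite (bigD1_seq t0) ?mem_index_iota ?iota_uniq //= eqxx.
by rewrite [X in _ + X]big1 ?addr0 // => c /negbTE ->.
Qed.

End MaskExpectation.

Section DeletionChannel.

Variable R : realType.

Lemma circ_shift_prob_eq0 (s a : bitseq) :
  count id s != count id a -> circ_shift_prob s a = 0 :> R.
Proof.
move=> neq_count; rewrite /circ_shift_prob; case: ifP => _.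
  by case: eqP => // eq_sa; rewrite eq_sa eqxx in neq_count.
rewrite count_iota_sum big1 ?mul0r // => r _; case: eqP => // rot_eq.
by move: neq_count; rewrite -rot_eq count_rot eqxx.
Qed.

Lemma circ_shift_prob_blocks cs a c : size cs = size a -> (0 < size a)%N ->
  circ_shift_prob (blocks cs) (rot c (blocks a)) =
  (size (blocks a))%:R^-1 * \sum_(1 <= i < (size a).+1) (cs == rot i a)%:R :> R.
Proof.
move=> size_cs a_gt0.
have blocks_cs_neq0 : size (blocks cs) != 0%N.
  by rewrite -lt0n (leq_trans _ (count_size id _)) // count_blocks size_cs.
have blocks_a_head u : head true u = false -> (u == blocks a) = false.
  by case: a a_gt0 {size_cs} => // ? ? _; case: u => //= b u ->.
rewrite /circ_shift_prob (negbTE blocks_cs_neq0) count_iota_sum sum_rot_eq_rot.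
rewrite (@sum_rot_blocks (fun u => (u == blocks a) : nat)) => [|u /blocks_a_head -> //].
under eq_bigr do rewrite (inj_eq blocks_inj).
rewrite size_cs sum_rot_eq_swap natr_sum mulrC !big_distrr /=.
apply: eq_bigr => i _; case: eqP => [->|_]; last by rewrite !mulr0.
by rewrite size_blocks_rot.
Qed.

Lemma del_prob_blocks (p : R) Ns a : count id a = size Ns ->
  del_prob p (blocks Ns) a = block_expect p Ns (fun cs => circ_shift_prob (blocks cs) a).
Proof.
move=> count_a; rewrite /del_prob (mask_expectE p _ (circ_shift_prob^~ a)).
rewrite mask_expect_blocks // => s lt_s.
by rewrite circ_shift_prob_eq0 // count_a ltn_eqF.
Qed.

Lemma del_prob_blocks_rot (p : R) Ns a c : size Ns = size a -> (0 < size a)%N ->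
  del_prob p (blocks Ns) (rot c (blocks a)) =
  (size (blocks a))%:R^-1 * \sum_(1 <= i < (size a).+1)
    \prod_(0 <= j < size a) ((1 - p) * bin_weight p (nth 0%N Ns j) (nth 0%N (rot i a) j)).
Proof.
move=> size_Ns a_gt0.
rewrite del_prob_blocks ?size_Ns; last by rewrite count_rot count_blocks.
rewrite (@eq_block_expect _ _ _ _ (fun cs => (size (blocks a))%:R^-1 *
  \sum_(1 <= i < (size a).+1) (cs == rot i a)%:R)) => [|cs size_cs]; last first.
  by rewrite circ_shift_prob_blocks // size_cs.
rewrite block_expectZ block_expect_sum; congr (_ * _); apply: eq_bigr => i _.
by rewrite block_expect_indicator ?size_rot // size_Ns.
Qed.

End DeletionChannel.

Lemma mul_bin_succ (R : pzRingType) N c :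
  'C(N, c)%:R * N.+1%:R = 'C(N.+1, c)%:R * (N.+1%:R - c%:R) :> R.
Proof.
case: (leqP c N.+1) => [le_c | lt_c]; last by rewrite !bin_small ?mul0r // ltnW.
by rewrite -natrB // -!natrM mulnC mul_bin_down mulnC.
Qed.

Section BinomialPadding.

Variables (R : comPzRingType) (p : R).

Lemma bin_prod_shift n c x X : (x <= X)%N ->
  'C(n + x, c)%:R * \prod_(x.+1 <= h < X.+1) (n + h)%:R =
  'C(n + X, c)%:R * \prod_(x.+1 <= h < X.+1) ((n + h)%:R - c%:R) :> R.
Proof.
elim: X => [|X IH]; first by rewrite leqn0 => /eqP->; rewrite !big_geq.
rewrite leq_eqVlt ltnS => /orP[/eqP-> | le_xX]; first by rewrite !big_geq.
rewrite [in LHS]big_nat_recr // [in RHS]big_nat_recr //= mulrA IH // addnS.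
by rewrite -mulrA [P in _ * P]mulrC [LHS]mulrA mul_bin_succ; ring.
Qed.

Definition pad_factor n X x : R := p ^+ (X - x) * \prod_(x.+1 <= h < X.+1) (n + h)%:R.

Lemma bin_weight_pad n c x X : (x <= X)%N ->
  bin_weight p (n + x) c * pad_factor n X x =
  bin_weight p (n + X) c * \prod_(x.+1 <= h < X.+1) ((n + h)%:R - c%:R).
Proof.
move=> le_xX; have shift := bin_prod_shift n c le_xX; rewrite /bin_weight /pad_factor.
case: (leqP c (n + x)) => [le_c | lt_c].
  rewrite (_ : n + X - c = n + x - c + (X - x))%N ?exprD; last by lia.
  transitivity ((1 - p) ^+ c * p ^+ (n + x - c) * p ^+ (X - x) *
    ('C(n + x, c)%:R * \prod_(x.+1 <= h < X.+1) (n + h)%:R)); first ring.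
  by rewrite shift; ring.
move: shift; rewrite bin_small // !mul0r => /esym shift0.
transitivity ((1 - p) ^+ c * p ^+ (n + X - c) * 0); first by rewrite mulr0.
by rewrite -shift0; ring.
Qed.

End BinomialPadding.

Lemma pad_factor_neq0 (R : numDomainType) (p : R) n X x : p != 0 -> pad_factor p n X x != 0.
Proof.
move=> p_neq0; rewrite /pad_factor mulf_neq0 ?expf_neq0 // prodf_seq_neq0.
by apply/allP => -[|h]; rewrite mem_index_iota //= pnatr_eq0 addnS.
Qed.

Lemma prod_bin_weight_pad (R : numFieldType) (p : R) n X k xs cs :
  p != 0 -> size xs = k -> size cs = k -> all (fun x => x <= X)%N xs ->
  \prod_(0 <= j < k) ((1 - p) * bin_weight p (n + nth 0%N xs j) (nth 0%N cs j)) =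
  \prod_(c <- cs) ((1 - p) * bin_weight p (n + X) c) *
  \prod_(x <- xs) (pad_factor p n X x)^-1 *
  \prod_(0 <= j < k) \prod_((nth 0%N xs j).+1 <= h < X.+1) ((n + h)%:R - (nth 0%N cs j)%:R).
Proof.
move=> p_neq0 size_xs size_cs xs_le.
rewrite [\prod_(c <- cs) _](big_nth 0%N) [\prod_(x <- xs) _](big_nth 0%N) size_cs size_xs.
rewrite -!big_split /=.
apply: eq_big_nat => j /andP[_ lt_jk].
have le_xX : (nth 0%N xs j <= X)%N by apply: (allP xs_le); rewrite mem_nth // size_xs.
have pad_neq0 := @pad_factor_neq0 R p n X (nth 0%N xs j) p_neq0.
by apply: (mulIf pad_neq0); rewrite -[LHS]mulrA bin_weight_pad //; field.
Qed.

Theorem lemma5p1 (R : realType) (k n xstar : nat) (p : R) (aseq : seq nat) :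
  (0 < k)%N -> (0 < n)%N -> (0 < xstar)%N -> 0 < p < 1 -> size aseq = k ->
  exists Sym : seq nat -> R,
    (forall s t : seq nat, size s = k -> all (fun v => v <= xstar)%N s ->
        perm_eq s t -> Sym s = Sym t) /\
    (forall (r : nat) (xs : seq nat), size xs = k -> all (fun v => v <= xstar)%N xs ->
       del_prob p (xstring n xs) (rot r (blocks aseq)) =
       Sym xs *
       \sum_(1 <= i < k.+1) \prod_(1 <= j < k.+1)
          \prod_((nth 0%N xs j.-1).+1 <= h < xstar.+1)
             (p * n%:R - bcoef n p aseq ((j + i).-1 %% k) + h%:R)).
Proof.
move=> a_gt0 _ _ /andP[p_gt0 _] size_a; subst k.
pose Sym xs := (size (blocks aseq))%:R^-1 *
  \prod_(c <- aseq) ((1 - p) * bin_weight p (n + xstar) c) *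
  \prod_(x <- xs) (pad_factor p n xstar x)^-1.
exists Sym; split=> [s t _ _ perm_st | r xs size_xs xs_le].
  by rewrite /Sym (perm_big _ perm_st).
rewrite /xstring del_prob_blocks_rot ?size_map // /Sym -!mulrA; congr (_ * _).
rewrite mulrA big_distrr; apply: eq_big_nat => i /andP[_ le_i].
rewrite (eq_big_nat _ _ (F2 := fun j =>
  (1 - p) * bin_weight p (n + nth 0%N xs j) (nth 0%N (rot i aseq) j))); last first.
  by move=> j /andP[_ lt_j]; rewrite (nth_map 0%N) // size_xs.
rewrite (@prod_bin_weight_pad _ _ _ xstar) ?gt_eqF ?size_rot //.
rewrite (perm_big aseq) ?perm_rot // big_add1 /=; congr (_ * _).
apply: eq_big_nat => j /andP[_ lt_j]; apply: eq_bigr => h _.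
by rewrite nth_rot // /bcoef natrD; ring.
Qed.
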